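(* Let $p$ be a prime, $k$ a commutative ring of characteristic $p$, $n\in\mathbb{N}$, and $x\in W\Omega_{k[X_1,\ldots,X_n]/k}$. There exists $\varepsilon>0$ with $\gamma_\varepsilon(x)\neq-\infty$ if and only if there exists $\varepsilon'>0$ with $\zeta_{\varepsilon'}(x)\neq-\infty$.
   Context: $W\Omega=W\Omega_{k[\underline{X}]/k}$ is the (Langer–Zink) de Rham–Witt complex of $k[\underline X]=k[X_1,\ldots,X_n]$ over $k$, with $d$, $F$, $V$ and Teichmüller map $[\cdot]$. A weight function is a map $a\colon\{1,\ldots,n\}\to\mathbb{N}[1/p]$; $|a|=\sum_i a_i$; $\mathrm{Supp}(a)=\{i: a_i\neq0\}$; $a|_J$ equals $a$ on $J$ and $0$ elsewhere; $\mathrm{val}_p(a)=\min_{i\in\mathrm{Supp}(a)}\mathrm{val}_p(a_i)$, $u(a)=\max\{0,-\mathrm{val}_p(a)\}$ ($u(0)=0$). A partition of $a$ is a subset $I\subseteq\mathrm{Supp}(a)$; $\mathcal P$ is the set of pairs $(a,I)$. Order $\mathrm{Supp}(a)$ by $i\preceq i'$ iff $\mathrm{val}_p(a_i)<\mathrm{val}_p(a_{i'})$, or equality and $i\leqslant i'$. For $I=\{i_1\prec\cdots\prec i_m\}$: $I_0=\{i: i\prec i_1\}$ ($=\mathrm{Supp}(a)$ if $m=0$), $I_l=\{i: i_l\preceq i\prec i_{l+1}\}$ ($1\leqslant l<m$), $I_m=\{i: i_m\preceq i\}$. For $a\neq0$, $g(a)=F^{u(a)+\mathrm{val}_p(a)}d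 V^{u(a)}[\underline X^{p^{-\mathrm{val}_p(a)}a}]$ with $\underline X^c=\prod X_i^{c_i}$. For $\eta\in W(k)$: $e(\eta,a,I)=dV^{u(a)}(\eta[\underline X^{p^{u(a)}a|_{I_1}}])\prod_{l=2}^m g(a|_{I_l})$ if $I_0=\emptyset$ and $u(a)\neq0$, else $e(\eta,a,I)=V^{u(a)}(\eta[\underline X^{p^{u(a)}a|_{I_0}}])\prod_{l=1}^m g(a|_{I_l})$. Every $x$ is uniquely a convergent sum $\sum_{(a,I)\in\mathcal P}e(\eta_{a,I},a,I)$, $\eta_{a,I}\in W(k)$. $\mathrm{val}_V(\eta)=\sup\{m:\eta\in V^m(W(k))\}$ ($+\infty$ for $\eta=0$). For $\varepsilon>0$: $\gamma_\varepsilon(x)=\inf_{(a,I)}\big(\mathrm{val}_V(\eta_{a,I})+u(a)-\varepsilon|a|\big)$ and $\zeta_\varepsilon(x)=\inf_{(a,I)}\big(2n\,\mathrm{val}_V(\eta_{a,I})+c(a,I)u(a)-\varepsilon|a|\big)$, where $c(a,I)=\#I$ if $I_0=\emptyset$ and $\#I+1$ otherwise (empty infima are $+\infty$). *)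

From HB Require Import structures.
From mathcomp Require Import all_boot all_order all_algebra.
From mathcomp Require Import classical_sets reals constructive_ereal ereal.
Set Implicit Arguments.
Unset Strict Implicit.
Unset Printing Implicit Defensive.
Import Order.TTheory GRing.Theory Num.Theory.
Local Open Scope ring_scope.

Definition valp (p : nat) (q : rat) : int :=
  (logn p `|numq q|%N)%:Z - (logn p `|denq q|%N)%:Z.

(* Variables X_1..X_n are indexed by 'I_n (i.e. i-1 for X_i). *)
Definition weightT (n : nat) := {ffun 'I_n -> rat}.

(* a : {1..n} -> N[1/p] *)
Definition is_weight (p n : nat) (a : weightT n) : Prop :=
  forall i, exists m N : nat, (p ^ m)%:R * a i = N%:R.

Definition supp (n : nat) (a : weightT n) : {set 'I_n} := [set i | a i != 0].

Definition wnorm (n : nat) (a : weightT n) : rat := \sum_(i < n) a i.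

(* u(a) = max(0, - val_p(a)) with val_p(a) = min_{i in Supp a} val_p(a_i);
   equivalently max over i in Supp a of max(0, -val_p(a_i)); u(0) = 0. *)
Definition u_of (p n : nat) (a : weightT n) : nat :=
  \max_(i in supp a) `|Num.max 0%R (- valp p (a i))|%N.

Definition prec_eq (p n : nat) (a : weightT n) (i i' : 'I_n) : bool :=
  (valp p (a i) < valp p (a i'))%R ||
  ((valp p (a i) == valp p (a i')) && (i <= i')%N).

(* I_0 = { i in Supp a : i strictly precedes i_1 = min I } (= Supp a if I = ∅) *)
Definition I0 (p n : nat) (a : weightT n) (I : {set 'I_n}) : {set 'I_n} :=
  [set i in supp a | [forall j in I, prec_eq p a i j && (i != j)]].

Definition is_partition (p n : nat) (a : weightT n) (I : {set 'I_n}) : Prop :=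
  is_weight p a /\ I \subset supp a.

Definition c_of (p n : nat) (a : weightT n) (I : {set 'I_n}) : nat :=
  if I0 p a I == finset.set0 then #|I| else #|I|.+1.

(* An element of W(k) is given by its Witt components (eta_0, eta_1, ...);
   V(eta_0, eta_1, ...) = (0, eta_0, eta_1, ...), so V^m W(k) is the set of
   Witt vectors whose first m components vanish. *)
Definition witt (k : Type) := nat -> k.

Definition inVm (k : nzRingType) (m : nat) (eta : witt k) : Prop :=
  forall j, (j < m)%N -> eta j = 0.

Definition valV (R : realType) (k : nzRingType) (eta : witt k) : \bar R :=
  ereal_sup [set ((m%:R : R)%:E) | m in [set m : nat | inVm m eta]].

(* By Langer--Zink, x in W Omega_{k[X]/k} is uniquely a convergent sum
   sum_{(a,I) in P} e(eta_{a,I}, a, I); we represent x by its coefficient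
   family (values outside P are irrelevant).  Convergence (in the V-adic
   topology) means: for every m, e(eta_{a,I},a,I) lies in Fil^m, i.e.
   eta_{a,I} in V^{m - u(a)} W(k), for all but finitely many (a, I). *)
Definition coeff_family (p : nat) (k : nzRingType) (n : nat) :=
  weightT n -> {set 'I_n} -> witt k.

Definition convergent (p : nat) (k : nzRingType) (n : nat)
    (eta : coeff_family p k n) : Prop :=
  forall m : nat, exists s : seq (weightT n * {set 'I_n}),
    forall a I, is_partition p a I -> (a, I) \notin s ->
      inVm (m - u_of p a) (eta a I).

Definition WOmega (p : nat) (k : nzRingType) (n : nat) :=
  {eta : coeff_family p k n | convergent eta}.

Definition coeffs (p : nat) (k : nzRingType) (n : nat) (x : WOmega p k n) :
  coeff_family p k n := proj1_sig x.

Local Open Scope ereal_scope.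

Definition gamma_eps (R : realType) (p : nat) (k : nzRingType) (n : nat)
    (eps : R) (x : WOmega p k n) : \bar R :=
  ereal_inf [set v | exists a I, is_partition p a I /\
                 valV R (coeffs x a I) + ((u_of p a)%:R : R)%:E
                 - (eps * ratr (wnorm a))%:E
 = v].

Definition zeta_eps (R : realType) (p : nat) (k : nzRingType) (n : nat)
    (eps : R) (x : WOmega p k n) : \bar R :=
  ereal_inf [set v | exists a I, is_partition p a I /\
                 ((2 * n)%:R : R)%:E * valV R (coeffs x a I)
                 + ((c_of p a I * u_of p a)%:R : R)%:E
                 - (eps * ratr (wnorm a))%:E
 = v].

From HB Require Import structures.
From mathcomp Require Import all_boot all_order all_algebra.
From mathcomp Require Import classical_sets reals constructive_ereal ereal.
From mathcomp Require Import lra.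
Set Implicit Arguments.
Unset Strict Implicit.
Import Order.TTheory GRing.Theory Num.Theory.
Local Open Scope ring_scope.
Local Open Scope ereal_scope.

(* Both gamma_eps and zeta_eps are infima, over the partitions (a, I), of
   terms built from v = val_V(eta_{a,I}) >= 0 and u = u(a).  Since
   c(a, I) u(a) lies between u(a) and (n + 1) u(a) <= 2n u(a) for n >= 1, the
   zeta-term for eps dominates the gamma-term for eps, and is at most 2n
   times the gamma-term for eps / 2n.  Hence a finite lower bound for one
   infimum gives one for the other; for n = 0 all weights vanish and both
   infima are nonnegative. *)

Lemma neqNyP (R : realDomainType) (y : \bar R) :
  y != -oo <-> exists C : R, C%:E <= y.
Proof.
split; last by case=> C; case: y.
by case: y => [r _| _|//]; [exists r | exists 0%R; exact: leey].
Qed.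

Lemma lee_addr_scale (R : realDomainType) (v : \bar R) (u u' m A : R) :
  0 <= v -> (u <= u')%R -> (1 <= m)%R ->
  v + u%:E - A%:E <= m%:E * v + u'%:E - A%:E.
Proof.
move=> + u_le m_ge1; case: v => [r r_ge0| _|//].
  by rewrite -EFinM !lee_fin in r_ge0 *; nra.
by rewrite gt0_muley ?lte_fin ?(lt_le_trans ltr01 m_ge1) // !addye // leey.
Qed.

Lemma lee_pdivr_scale (R : realFieldType) (v : \bar R) (u w m e W C : R) :
  0 <= v -> (w <= m * u)%R -> (0 < m)%R ->
  C%:E <= m%:E * v + w%:E - (e * W)%:E ->
  (C / m)%:E <= v + u%:E - (e / m * W)%:E.
Proof.
move=> + w_le m_gt0; case: v => [r r_ge0| _ _|//].
  rewrite -EFinM !lee_fin ler_pdivrMr // in r_ge0 * => C_le.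
  by rewrite mulrBl mulrDl [(e / m * W)%R]mulrAC divfK ?gt_eqF //; nra.
by rewrite !addye // leey.
Qed.

Section Partitions.
Variables (p n : nat) (a : weightT n).

Lemma I0_set0 : I0 p a finset.set0 = supp a.
Proof.
by apply/setP => i; rewrite !inE andb_idr // => _; apply/forall_inP => j;
  rewrite inE.
Qed.

Lemma u_of_supp0 : supp a = finset.set0 -> u_of p a = 0%N.
Proof. by rewrite /u_of => ->; rewrite big_set0. Qed.

Lemma c_of_gt0 (I : {set 'I_n}) :
  supp a != finset.set0 -> (0 < c_of p a I)%N.
Proof.
move=> supp_neq0; rewrite /c_of; case: eqP => // I0_eq0.
rewrite card_gt0; apply: contra_neq supp_neq0 => I_eq0.
by rewrite -I0_set0 -I_eq0 I0_eq0.
Qed.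

Lemma u_of_le_c_of_mul (I : {set 'I_n}) :
  (u_of p a <= c_of p a I * u_of p a)%N.
Proof.
have [/u_of_supp0 ->|supp_neq0] := eqVneq (supp a) finset.set0; first by [].
by rewrite leq_pmull // c_of_gt0.
Qed.

Lemma c_of_le (I : {set 'I_n}) : (c_of p a I <= n.+1)%N.
Proof.
have := max_card I; rewrite card_ord /c_of => I_le.
by case: ifP => _ //; apply: leqW.
Qed.

End Partitions.

Lemma wnorm_dim0 (a : weightT 0) : wnorm a = 0%R.
Proof. by rewrite /wnorm big_ord0. Qed.

Lemma u_of_dim0 (p : nat) (a : weightT 0) : u_of p a = 0%N.
Proof. by apply: u_of_supp0; apply/setP => -[]. Qed.

Section Infima.
Variables (R : realType) (p : nat) (k : nzRingType) (n : nat).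

Lemma valV_ge0 (eta : witt k) : 0 <= valV R eta.
Proof. by apply: ereal_sup_ubound; exists 0%N. Qed.

Lemma gamma_eps_le_zeta_eps (eps : R) (x : WOmega p k n) :
  (0 < n)%N -> gamma_eps eps x <= zeta_eps eps x.
Proof.
move=> n_gt0; apply/ereal_infP => _ [a [I [aI <-]]].
apply: ge_ereal_inf; exists (valV R (coeffs x a I) + ((u_of p a)%:R : R)%:E
                             - (eps * ratr (wnorm a))%:E); first by exists a, I.
by apply: lee_addr_scale; rewrite ?valV_ge0 ?ler_nat ?u_of_le_c_of_mul
  ?ler1n ?muln_gt0.
Qed.

Lemma zeta_eps_lb_gamma_eps (eps C : R) (x : WOmega p k n) :
  (0 < n)%N -> C%:E <= zeta_eps eps x ->
  (C / (2 * n)%:R)%:E <= gamma_eps (eps / (2 * n)%:R) x.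
Proof.
move=> n_gt0 /ereal_infP C_le; apply/ereal_infP => _ [a [I [aI <-]]].
apply: (@lee_pdivr_scale _ _ _ (c_of p a I * u_of p a)%N%:R).
- exact: valV_ge0.
- rewrite -natrM ler_nat leq_mul2r (leq_trans (c_of_le p a I)) ?orbT //.
  by rewrite mul2n -addnn -addn1 leq_add2l.
- by rewrite ltr0n muln_gt0.
- by apply: C_le; exists a, I.
Qed.

Lemma gamma_eps_dim0_ge0 (eps : R) (x : WOmega p k 0) : 0 <= gamma_eps eps x.
Proof.
apply/ereal_infP => _ [a [I [_ <-]]].
by rewrite wnorm_dim0 u_of_dim0 (rmorph0 (@ratr R)) mulr0 adde0 sube0 valV_ge0.
Qed.

Lemma zeta_eps_dim0_ge0 (eps : R) (x : WOmega p k 0) : 0 <= zeta_eps eps x.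
Proof.
apply/ereal_infP => _ [a [I [_ <-]]].
by rewrite wnorm_dim0 u_of_dim0 muln0 (rmorph0 (@ratr R)) mulr0 mul0e add0e
  sube0.
Qed.

End Infima.

Theorem mainTheorem2 (R : realType) (p : nat) (k : comNzRingType) (n : nat)
    (x : WOmega p k n) :
  prime p -> p \in [pchar k] ->
  (exists eps : R, (0 < eps)%R /\ gamma_eps eps x != -oo) <->
  (exists eps' : R, (0 < eps')%R /\ zeta_eps eps' x != -oo).
Proof.
move=> _ _; have [n0|n_gt0] := posnP n.
  subst n; split=> _; exists 1%R; split=> //; apply/neqNyP; exists 0%R.
    exact: zeta_eps_dim0_ge0.
  exact: gamma_eps_dim0_ge0.
split=> -[eps [eps_gt0 /neqNyP [C C_le]]].
  exists eps; split=> //; apply/neqNyP; exists C.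
  exact: le_trans C_le (gamma_eps_le_zeta_eps eps x n_gt0).
exists (eps / (2 * n)%:R)%R; split.
  by rewrite divr_gt0 // ltr0n muln_gt0.
apply/neqNyP; exists (C / (2 * n)%:R)%R.
exact: zeta_eps_lb_gamma_eps n_gt0 C_le.
Qed.
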